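(* Let $X$ be an undirected graph and let $f:Y\to X$, $g:Z\to X$ be objects of $C_X$ such that $Y$ and $Z$ have no loops and, for every $p\ge1$, have finitely many $p$-cycles without backtracking. If there is a morphism $h:Y\to Z$ in $C_X$ (from $f$ to $g$) which is a weak equivalence for the model on $C_X$ defined by counting $R_X=\bigcup_{p\ge1}R^p_X$, then $Y$ and $Z$ have the same Ihara zeta function.
   Context: An undirected graph has nodes $X(0)$, half-arcs $X(1)$, $s,t:X(1)\to X(0)$, and an involution $\iota$ with $s\circ\iota=t$; morphisms commute with $s,t,\iota$. An arc is a pair $\{u,\iota(u)\}$; a loop is an arc whose source and target coincide. $X(x,* )$ is the set of arcs having $x$ as source or target. A morphism $f$ is a covering if for every node $x$ the induced map $X(x,* )\to Y(f_0(x),* )$ is bijective. $C_X$: objects are coverings $Y\to X$; morphisms from $f:Y\to X$ to $g:Z\to X$ are coverings $h:Y\to Z$ with $g\circ h=f$. For $p\ge1$, $c^p_U$ has nodes $\mathbb{Z}/p\mathbb{Z}$ and half-arcs $[n]^\pm$ with $s([n]^+)=[n]$, $t([n]^+)=[n+1]$, $s([n]^-)=[n+1]$, $t([n]^-)=[n]$, $\iota([n]^+)=[n]^-$; a $p$-cycle is a morphism $c^p_U\to Y$, with backtracking if $h_1([n+1]^+)=h_1([n]^-)$ for some $n$. $R^p_X$ is the set of objects $U\to X$ of $C_X$ where $U$ contains a subgraph isomorphic to $c^p_U$ and removing its arcs leaves a forest each of whose trees meets the cycle in exactly one node. A morphism $h$ from $f:Y\to X$ to $g:Z\to X$ in $C_X$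 is a weak equivalence if for every $p\ge1$ and every $U\in R^p_X$, composition with $h$ is a bijection $\mathrm{Hom}_{C_X}(U,Y)\to\mathrm{Hom}_{C_X}(U,Z)$. If $c_p(Y)$ denotes the number of $p$-cycles of $Y$ without backtracking, the Ihara zeta function of $Y$ is $\exp\big(\sum_{p\ge1} c_p(Y)t^p/p\big)$. *)

From HB Require Import structures.
From mathcomp Require Import all_boot all_order all_algebra.
From Stdlib Require Import Relation_Operators List.
Set Implicit Arguments. Unset Strict Implicit. Unset Printing Implicit Defensive.
Import Order.TTheory GRing.Theory Num.Theory.

Record graph := Graph {
  node : Type;
  harc : Type;
  src : harc -> node;
  tgt : harc -> node;
  inv : harc -> harc;
  inv_invol : forall e, inv (inv e) = e;
  src_inv : forall e, src (inv e) = tgt e }.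
Arguments src {g}. Arguments tgt {g}. Arguments inv {g}.

Record mor (G H : graph) := Mor {
  mor0 : node G -> node H;
  mor1 : harc G -> harc H;
  mor_src : forall e, src (mor1 e) = mor0 (src e);
  mor_tgt : forall e, tgt (mor1 e) = mor0 (tgt e);
  mor_inv : forall e, mor1 (inv e) = inv (mor1 e) }.

Definition mor_comp (G H K : graph) (g : mor H K) (f : mor G H) : mor G K.
Proof.
refine (@Mor G K (fun x => mor0 g (mor0 f x)) (fun e => mor1 g (mor1 f e)) _ _ _).
- by move=> e; rewrite mor_src mor_src.
- by move=> e; rewrite mor_tgt mor_tgt.
- by move=> e; rewrite mor_inv mor_inv.
Defined.

Definition arc_at (G : graph) (x : node G) (e : harc G) : Prop :=
  src e = x \/ tgt e = x.
Definition same_arc (G : graph) (e e' : harc G) : Prop := e' = e \/ e' = inv e.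

(* covering: the induced map X(x,* ) -> Y(f0 x,* ) on arcs is bijective *)
Definition covering (G H : graph) (f : mor G H) : Prop :=
  forall x : node G,
    (forall e e', arc_at x e -> arc_at x e' ->
        same_arc (mor1 f e) (mor1 f e') -> same_arc e e') /\
    (forall d, arc_at (mor0 f x) d ->
        exists e, arc_at x e /\ same_arc (mor1 f e) d).

Definition no_loops (G : graph) : Prop := forall e : harc G, src e <> tgt e.

(* nodes Z/pZ = 'I_p with successor ordS; half-arcs [n]^+ = (n,true), [n]^- = (n,false) *)
Definition cyc_src p (a : 'I_p * bool) : 'I_p := if a.2 then a.1 else ordS a.1.
Definition cyc_tgt p (a : 'I_p * bool) : 'I_p := if a.2 then ordS a.1 else a.1.
Definition cyc_inv p (a : 'I_p * bool) : 'I_p * bool := (a.1, ~~ a.2).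

Lemma cyc_inv_invol p (a : 'I_p * bool) : cyc_inv (cyc_inv a) = a.
Proof. by case: a => n b; rewrite /cyc_inv /= negbK. Qed.
Lemma cyc_src_inv p (a : 'I_p * bool) : cyc_src (cyc_inv a) = cyc_tgt a.
Proof. by case: a => n [] . Qed.

Definition cycle_graph (p : nat) : graph :=
  @Graph 'I_p ('I_p * bool) (@cyc_src p) (@cyc_tgt p) (@cyc_inv p)
         (@cyc_inv_invol p) (@cyc_src_inv p).

Definition pcycle (p : nat) (Y : graph) := mor (cycle_graph p) Y.

Definition backtracking p (Y : graph) (c : pcycle p Y) : Prop :=
  exists n : 'I_p, mor1 c (ordS n, true) = mor1 c (n, false).

Definition nb_cycle (Y : graph) (p : nat) (c : pcycle p Y) : Prop :=
  ~ backtracking c.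

Definition has_card (T : Type) (P : T -> Prop) (n : nat) : Prop :=
  exists l : list T, List.NoDup l /\ length l = n /\ (forall x, P x <-> List.In x l).

Definition injective_mor (G H : graph) (k : mor G H) : Prop :=
  injective (mor0 k) /\ injective (mor1 k).

(* U contains a subgraph (image of the embedding c) isomorphic to c^p_U such
   that removing its arcs leaves a forest each of whose trees meets the cycle
   in exactly one node *)
Definition unicyclic_with (p : nat) (U : graph) (c : mor (cycle_graph p) U) : Prop :=
  let removed := fun e : harc U => exists a, mor1 c a = e in
  let adj := fun x y : node U => exists e, ~ removed e /\ src e = x /\ tgt e = y in
  let conn := clos_refl_trans (node U) adj in
  (* the remaining graph is a forest: it contains no subgraph isomorphic to
     some c^q_U, q >= 1 *)
  (forall q (k : mor (cycle_graph q) U), 0 < q -> injective_mor k ->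
      ~ (forall a, ~ removed (mor1 k a))) /\
  (* each tree (connected component) meets the cycle in exactly one node *)
  (forall v : node U, exists n : 'I_p,
      conn v (mor0 c n) /\ forall n' : 'I_p, conn v (mor0 c n') -> n' = n).

Definition in_R (X : graph) (p : nat) (U : graph) (u : mor U X) : Prop :=
  covering u /\
  exists c : mor (cycle_graph p) U, injective_mor c /\ unicyclic_with c.

(* h (from f to g in C_X) is a weak equivalence: for all p >= 1 and U in R^p_X,
   composition with h : Hom_{C_X}(U,Y) -> Hom_{C_X}(U,Z) is bijective *)
Definition weak_equiv (X Y Z : graph) (f : mor Y X) (g : mor Z X) (h : mor Y Z)
  : Prop :=
  forall p, 0 < p -> forall (U : graph) (u : mor U X), in_R p u ->
    (forall k k' : mor U Y, covering k -> covering k' ->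
        mor_comp f k = u -> mor_comp f k' = u ->
        mor_comp h k = mor_comp h k' -> k = k') /\
    (forall m : mor U Z, covering m -> mor_comp g m = u ->
        exists k : mor U Y, [/\ covering k, mor_comp f k = u & mor_comp h k = m]).

(* coefficient n of exp(S), S = sum_{p>=1} c_p t^p / p ; since S has no constant
   term, only S truncated at degree n and the powers S^m, m <= n, contribute. *)
Local Open Scope ring_scope.
Definition zeta_trunc_log (c : nat -> nat) (n : nat) : {poly rat} :=
  \sum_(1 <= p < n.+1) (((c p)%:R / (p%:R)) *: 'X^p).
Definition ihara_zeta (c : nat -> nat) : nat -> rat :=
  fun n => (\sum_(m < n.+1) ((m`!)%:R)^-1 *: (zeta_trunc_log c n) ^+ m)`_n.

(* Since the zeta function only depends on the numbers c_p of non-backtracking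
   p-cycles, it suffices to show that c |-> h o c is a bijection from the
   non-backtracking p-cycles of Y onto those of Z.  The key object is, for a
   non-backtracking p-cycle ga of a loopless graph Z, its cyclic cover U: the
   covering of Z whose nodes are reduced walks hanging off a copy of the
   cycle.  U, mapped to X, lies in R^p_X, and it has a lifting property: any
   cycle of Y lying over ga through h extends to a covering U -> Y over Z.
   Testing the weak equivalence on U therefore gives injectivity (two cycles
   with the same image yield two lifts of U with the same composite) and
   surjectivity (a cycle of Z is the image of the lift of U's own cycle). *)

From Pilot Require Import Defs.
From mathcomp Require Import all_boot all_order all_algebra.
From Stdlib Require Import ProofIrrelevance FunctionalExtensionality ClassicalEpsilon.
From Stdlib Require Import Relation_Operators.
From Stdlib Require List.
(* re-import the graph vocabulary over the homonymous algebra notions *)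
Import Defs.
Set Implicit Arguments. Unset Strict Implicit. Unset Printing Implicit Defensive.

Lemma tgt_inv (G : graph) (e : harc G) : tgt (inv e) = src e.
Proof. by rewrite -src_inv inv_invol. Qed.

Lemma mor_ext (G H : graph) (a b : mor G H) :
  (forall x, mor0 a x = mor0 b x) -> (forall e, mor1 a e = mor1 b e) -> a = b.
Proof.
case: a => a0 a1 ? ? ?; case: b => b0 b1 ? ? ? /= agree0 agree1.
have E0 : a0 = b0 by apply: functional_extensionality.
have E1 : a1 = b1 by apply: functional_extensionality.
by subst b0 b1; f_equal; apply: proof_irrelevance.
Qed.

Lemma mor_comp_assoc (A B C D : graph) (a : mor C D) (b : mor B C) (c : mor A B) :
  mor_comp a (mor_comp b c) = mor_comp (mor_comp a b) c.
Proof. by apply: mor_ext. Qed.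

Lemma same_arc_sym (G : graph) (a b : harc G) : same_arc a b -> same_arc b a.
Proof. by rewrite /same_arc => -[->|->]; rewrite ?inv_invol; tauto. Qed.

Lemma same_arc_trans (G : graph) (a b d : harc G) :
  same_arc a b -> same_arc b d -> same_arc a d.
Proof. by rewrite /same_arc => -[->|->] [->|->]; rewrite ?inv_invol; tauto. Qed.

Lemma mor_same_arc (G H : graph) (k : mor G H) (e e' : harc G) :
  same_arc e e' -> same_arc (mor1 k e) (mor1 k e').
Proof. by case=> ->; [left | right; rewrite mor_inv]. Qed.

Lemma mor_arc_at (G H : graph) (k : mor G H) x e :
  arc_at x e -> arc_at (mor0 k x) (mor1 k e).
Proof. by rewrite /arc_at mor_src mor_tgt => -[->|->]; tauto. Qed.

Lemma arc_at_src (G : graph) (x : node G) e :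
  arc_at x e -> exists2 e0, src e0 = x & same_arc e0 e.
Proof.
case=> He; first by exists e => //; left.
by exists (inv e); [rewrite src_inv | right; rewrite inv_invol].
Qed.

Lemma covering_comp (G H K : graph) (l : mor H K) (k : mor G H) :
  covering k -> covering l -> covering (mor_comp l k).
Proof.
move=> ck cl x; split=> [e e' ae ae' sa | d ad].
  apply: (proj1 (ck x)) => //.
  by apply: (proj1 (cl (mor0 k x))) => //; apply: mor_arc_at.
have [e1 [ae1 s1]] := proj2 (cl (mor0 k x)) d ad.
have [e [ae s]] := proj2 (ck x) e1 ae1.
by exists e; split=> //; apply: same_arc_trans (mor_same_arc l s) s1.
Qed.

Lemma covering_cancel (G H K : graph) (l : mor H K) (k : mor G H) :
  covering l -> covering (mor_comp l k) -> covering k.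
Proof.
move=> cl clk x; split=> [e e' ae ae' sa | d ad].
  by apply: (proj1 (clk x)) => //; exact: (mor_same_arc l sa).
have [e [ae s]] := proj2 (clk x) (mor1 l d) (mor_arc_at l ad).
exists e; split=> //.
by apply: (proj1 (cl (mor0 k x))) => //; apply: mor_arc_at.
Qed.

Section LooplessCoverings.
Variables (G H : graph) (k : mor G H).

Lemma covering_of_star : no_loops H ->
  (forall e e', src e = src e' -> mor1 k e = mor1 k e' -> e = e') ->
  (forall x d, src d = mor0 k x -> exists2 e, src e = x & mor1 k e = d) ->
  covering k.
Proof.
move=> noloop inj sur x; split=> [e e' | d].
  move=> /arc_at_src [e0 s0 a0] /arc_at_src [e1 s1 a1] sa.
  have sa01 : same_arc (mor1 k e0) (mor1 k e1).
    apply: same_arc_trans (mor_same_arc k a0) _.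
    exact: same_arc_trans sa (mor_same_arc k (same_arc_sym a1)).
  case: sa01 => E.
    have E10 : e1 = e0 by apply: inj; rewrite ?s0 ?s1.
    by apply: same_arc_trans (same_arc_sym a0) _; rewrite -E10.
  by case: (noloop (mor1 k e0)); rewrite mor_src s0 -s1 -mor_src E src_inv.
move=> /arc_at_src [d0 s0 a0].
have [e se ke] := sur x d0 s0.
by exists e; split; [left | rewrite ke].
Qed.

Hypothesis cover : covering k.

Lemma covering_src_inj : no_loops G ->
  forall e e', src e = src e' -> mor1 k e = mor1 k e' -> e = e'.
Proof.
move=> noloop e e' Es Ek.
have [] // := proj1 (cover (src e)) e e' (or_introl erefl) (or_introl (esym Es))
  (or_introl (esym Ek)).
by move=> E; case: (noloop e); rewrite -[in RHS]src_inv -E -Es.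
Qed.

Lemma covering_src_lift : no_loops H ->
  forall x d, src d = mor0 k x -> exists e, src e = x /\ mor1 k e = d.
Proof.
move=> noloop x d Sd.
have [e [[Se|Te] [Ed|Ed]]] := proj2 (cover x) d (or_introl Sd).
- by exists e.
- by case: (noloop (mor1 k e)); rewrite mor_src Se -Sd Ed src_inv.
- by case: (noloop d); rewrite Sd -Te -mor_tgt Ed.
- by exists (inv e); rewrite src_inv mor_inv Ed.
Qed.

End LooplessCoverings.

Lemma has_card_bij (A B : Type) (P : A -> Prop) (Q : B -> Prop) (phi : A -> B) n m :
  has_card P n -> has_card Q m -> (forall a, P a -> Q (phi a)) ->
  (forall a a', P a -> P a' -> phi a = phi a' -> a = a') ->
  (forall b, Q b -> exists2 a, P a & phi a = b) -> n = m.
Proof.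
move=> [lA [ndA [<- memA]]] [lB [ndB [<- memB]]] PQ inj sur.
have ndM : List.NoDup (List.map phi lA).
  have : forall a, List.In a lA -> P a by move=> a /memA.
  elim: lA ndA {memA} => [|a l IH] nd inl /=; first by constructor.
  inversion nd; subst; constructor; last by apply: IH => // a' Ha'; apply/inl; right.
  move=> /List.in_map_iff [a' [E In']].
  suff Ea : a' = a by subst a'.
  exact: inj (inl a' (or_intror In')) (inl a (or_introl erefl)) E.
rewrite -(List.length_map phi lA); apply/anti_leq/andP; split; apply/leP.
- by apply: List.NoDup_incl_length => // b /List.in_map_iff [a [<- /memA/PQ/memB]].
- apply: List.NoDup_incl_length => // b /memB /sur [a /memA Pa <-].
  exact: List.in_map.
Qed.

Lemma cyc_tgt_inv p (a : 'I_p * bool) : cyc_tgt (cyc_inv a) = cyc_src a.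
Proof. by case: a => i []. Qed.

Lemma nb_cycle_src_inj (Y : graph) p (c : pcycle p Y) : nb_cycle c ->
  forall a a', cyc_src a = cyc_src a' -> mor1 c a = mor1 c a' -> a = a'.
Proof.
move=> nbc [i []] [j []]; rewrite /cyc_src /= => E Ec.
- by rewrite E.
- by case: nbc; exists j; rewrite -E.
- by case: nbc; exists i; rewrite E.
- by rewrite (ordS_inj E).
Qed.

Lemma nb_cycle_comp (Y Z : graph) (h : mor Y Z) p (c : pcycle p Y) :
  covering h -> no_loops Y -> nb_cycle c -> nb_cycle (mor_comp h c).
Proof.
move=> hh hY nbc [j Ej]; apply: nbc; exists j.
by apply: (covering_src_inj hh hY) => //; rewrite !mor_src.
Qed.

(* A node
   of U is a pair (n, w): w is a reduced walk in Z, stored last half-arc first,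
   starting at ga(n) and not leaving along the cycle; the node lies over the
   end of w.  The nodes (n, [::]) form a copy of the cycle, and the walks hang
   trees off it, one tree per cycle node. *)
Section CyclicCover.
Variables (Z : graph) (p : nat) (ga : pcycle p Z).
Hypothesis nb_ga : nb_cycle ga.

Definition walk_end (n : 'I_p) (w : seq (harc Z)) : node Z :=
  if w is e :: _ then tgt e else mor0 ga n.

Fixpoint reduced (n : 'I_p) (w : seq (harc Z)) : Prop :=
  match w with
  | [::] => True
  | e :: w' => [/\ reduced n w', src e = walk_end n w' &
      if w' is e' :: _ then e <> inv e'
      else forall a, cyc_src a = n -> e <> mor1 ga a]
  end.

Definition step (x : 'I_p * seq (harc Z)) (e : harc Z) : 'I_p * seq (harc Z) :=
  let: (n, w) := x in
  if w is e' :: w' then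
    if excluded_middle_informative (e = inv e') then (n, w') else (n, e :: w)
  else
    match excluded_middle_informative (exists a, cyc_src a = n /\ mor1 ga a = e)
    with
    | left H => (cyc_tgt (sval (constructive_indefinite_description _ H)), [::])
    | right _ => (n, [:: e])
    end.
#[global] Arguments step : simpl never.

Variant step_spec (n : 'I_p) (w : seq (harc Z)) (e : harc Z) :
    'I_p * seq (harc Z) -> Prop :=
  | StepAlong a of w = [::] & cyc_src a = n & mor1 ga a = e :
      step_spec n w e (cyc_tgt a, [::])
  | StepAway of (w = [::] -> forall a, cyc_src a = n -> e <> mor1 ga a)
      & (forall e' w', w = e' :: w' -> e <> inv e') :
      step_spec n w e (n, e :: w)
  | StepBack e' w' of w = e' :: w' & e = inv e' : step_spec n w e (n, w').

Lemma stepP n w e : step_spec n w e (step (n, w) e).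
Proof.
rewrite /step; case: w => [|e' w].
  case: excluded_middle_informative => [H|noH].
    case: constructive_indefinite_description => a [Ha Ea] /=.
    exact: StepAlong.
  by apply: StepAway => // _ a Ha Ea; apply: noH; exists a.
case: excluded_middle_informative => [Ee|Ne]; first exact: StepBack.
by apply: StepAway => // e'' w'' [<- _].
Qed.

Lemma step_reduced n w e : reduced n w -> src e = walk_end n w ->
  reduced (step (n, w) e).1 (step (n, w) e).2.
Proof.
case: stepP => //= [away_cyc away_back | e' w' -> _ [] //] red Se.
split=> //; case: w red Se away_cyc away_back => [|e' w'] _ _ away_cyc away_back.
  exact: away_cyc.
exact: away_back.
Qed.

Lemma step_end n w e : reduced n w -> src e = walk_end n w ->
  walk_end (step (n, w) e).1 (step (n, w) e).2 = tgt e.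
Proof.
case: stepP => //= [a _ _ <- _ _ | e' w' -> -> [_ <- _] _].
  by rewrite mor_tgt.
by rewrite tgt_inv.
Qed.

(* Following e and then inv e brings one back: U will be a graph. *)
Lemma step_inv n w e : reduced n w -> src e = walk_end n w ->
  step (step (n, w) e) (inv e) = (n, w).
Proof.
case: stepP => [a -> Ha <- | away_cyc away_back | e' w' -> ->] red Se.
- case: stepP => [a' _ Ha' Ea' | /(_ erefl (cyc_inv a)) | e' w' //].
    have -> : a' = cyc_inv a.
      by apply: (nb_cycle_src_inj nb_ga); [rewrite cyc_src_inv | rewrite Ea' mor_inv].
    by rewrite cyc_tgt_inv Ha.
  by case; rewrite ?cyc_src_inv ?mor_inv.
- case: stepP => [a' // | _ /(_ e w erefl) // | e' w' [<- <-] _ //].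
- rewrite inv_invol; move: red => -[_ _ back].
  case: stepP => [a w'0 Ha Ea | // | e'' w'' w'E Ee']; last by move: back; rewrite w'E.
  by move: back; rewrite w'0 => /(_ a Ha); rewrite Ea.
Qed.

Definition cnode := {x : 'I_p * seq (harc Z) | reduced x.1 x.2}.
Definition cnode_below (x : cnode) : node Z := walk_end (sval x).1 (sval x).2.

Lemma cnode_eq (x y : cnode) : sval x = sval y -> x = y.
Proof.
by case: x y => [x Px] [y Py] /= E; subst y; f_equal; apply: proof_irrelevance.
Qed.

Definition cstep (x : cnode) (e : harc Z) (Se : src e = cnode_below x) : cnode.
Proof.
exists (step (sval x) e).
by case: x Se => [[n w] red] /= Se; apply: step_reduced.
Defined.

Lemma cstep_val (x : cnode) e (Se : src e = cnode_below x) :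
  sval (cstep Se) = step (sval x) e.
Proof. by []. Qed.

Lemma cstep_below (x : cnode) e (Se : src e = cnode_below x) :
  cnode_below (cstep Se) = tgt e.
Proof. by case: x Se => [[n w] red] /= Se; apply: step_end. Qed.

Definition charc := {x : cnode & {e : harc Z | src e = cnode_below x}}.
Definition csrc (u : charc) : cnode := projT1 u.
Definition carc_below (u : charc) : harc Z := sval (projT2 u).
Definition ctgt (u : charc) : cnode := cstep (proj2_sig (projT2 u)).

Lemma cinv_proof (u : charc) : src (inv (carc_below u)) = cnode_below (ctgt u).
Proof. by rewrite src_inv /ctgt cstep_below. Qed.

Definition cinv (u : charc) : charc :=
  existT _ (ctgt u) (exist _ (inv (carc_below u)) (cinv_proof u)).

Lemma charc_eq (u u' : charc) : csrc u = csrc u' -> carc_below u = carc_below u' ->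
  u = u'.
Proof.
case: u u' => [x [e P]] [x' [e' P']]; rewrite /csrc /carc_below /= => E1 E2.
by subst x' e'; do 2 f_equal; apply: proof_irrelevance.
Qed.

Lemma cinv_invol (u : charc) : cinv (cinv u) = u.
Proof.
apply: charc_eq; rewrite /cinv /csrc /carc_below /= ?inv_invol //.
apply: cnode_eq; case: u => [[[n w] red] [e Se]] /=.
exact: step_inv.
Qed.

Lemma csrc_inv (u : charc) : csrc (cinv u) = ctgt u.
Proof. by []. Qed.

Definition cyclic_cover : graph :=
  @Graph cnode charc csrc ctgt cinv cinv_invol csrc_inv.

Definition cover_map : mor cyclic_cover Z.
Proof.
refine (@Mor cyclic_cover Z cnode_below carc_below _ _ _) => //= u.
- exact: proj2_sig (projT2 u).
- by rewrite /ctgt cstep_below.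
Defined.

Lemma cover_map_covering : no_loops Z -> covering cover_map.
Proof.
move=> hZ; apply: covering_of_star hZ _ _ => [e e' Es Ee | x d Sd].
  exact: charc_eq.
by exists (existT _ x (exist _ d Sd)).
Qed.

Definition cycle_node (n : 'I_p) : cnode := exist _ (n, [::]) I.

Lemma cycle_arc_proof (a : 'I_p * bool) :
  src (mor1 ga a) = cnode_below (cycle_node (cyc_src a)).
Proof. by rewrite mor_src. Qed.

Definition cycle_arc (a : 'I_p * bool) : charc :=
  existT _ (cycle_node (cyc_src a)) (exist _ (mor1 ga a) (cycle_arc_proof a)).

Lemma cycle_arc_tgt a : ctgt (cycle_arc a) = cycle_node (cyc_tgt a).
Proof.
apply: cnode_eq; rewrite /ctgt cstep_val /=.
case: stepP => [a' _ Ha' Ea' | /(_ erefl a erefl) // | e' w' //].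
by rewrite (nb_cycle_src_inj nb_ga Ha' Ea').
Qed.

Definition cover_cycle : mor (cycle_graph p) cyclic_cover.
Proof.
refine (@Mor (cycle_graph p) cyclic_cover cycle_node cycle_arc _ _ _) => //= a.
- exact: cycle_arc_tgt.
- by apply: charc_eq; rewrite /= /csrc /carc_below /= ?cycle_arc_tgt ?cyc_src_inv ?mor_inv.
Defined.

Lemma cover_cycle_injective : injective_mor cover_cycle.
Proof.
split=> [n n' /(f_equal sval) /= [] // | a a' E].
have Es : cyc_src a = cyc_src a' by move: E => /(f_equal csrc) /(f_equal sval) /= [].
have Ee : mor1 ga a = mor1 ga a' by move: E => /(f_equal carc_below).
exact: nb_cycle_src_inj Es Ee.
Qed.

Lemma cover_map_cycle : mor_comp cover_map cover_cycle = ga.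
Proof. by apply: mor_ext. Qed.

(* The part of U off the embedded cycle: it is a forest whose trees are rooted
   at the cycle nodes, as required for U to lie in R^p. *)
Definition on_cycle (u : charc) : Prop := exists a, mor1 cover_cycle a = u.
Definition off_cycle_adj (x y : cnode) : Prop :=
  exists u : charc, ~ on_cycle u /\ csrc u = x /\ ctgt u = y.

Definition root (x : cnode) : 'I_p := (sval x).1.
Definition depth (x : cnode) : nat := size (sval x).2.

Lemma off_cycle_step (u : charc) : ~ on_cycle u ->
  root (ctgt u) = root (csrc u) /\
  ((exists e' w', (sval (csrc u)).2 = e' :: w' /\ carc_below u = inv e') \/
   depth (ctgt u) = (depth (csrc u)).+1).
Proof.
case: u => [[[n w] red] [e Se]] off; rewrite /ctgt /csrc /root /depth cstep_val /=.
case: stepP => [a w0 Ha Ea | _ _ | e' w' w'E Ee]; [exfalso | by split=> //; right |].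
  apply: off; exists a; apply: charc_eq => //=.
  by apply: cnode_eq; rewrite /= Ha w0.
by split=> //; left; exists e', w'.
Qed.

(* The off-cycle part of U contains no embedded cycle: at a node of maximal
   depth, both half-arcs of such a cycle would retract the same half-arc. *)
Lemma off_cycle_acyclic q (k : mor (cycle_graph q) cyclic_cover) :
  0 < q -> injective_mor k -> ~ (forall a, ~ on_cycle (mor1 k a)).
Proof.
move=> q_gt0 [_ k1_inj] off.
have [i imax] := eq_bigmax (fun j => depth (mor0 k j))
  (eq_ind_r (fun m => 0 < m) q_gt0 (card_ord q)).
have retract (a : 'I_q * bool) : cyc_src a = i ->
    exists e' w', (sval (mor0 k i)).2 = e' :: w' /\
                  carc_below (mor1 k a) = inv e'.
  move=> Ha.
  have Es : csrc (mor1 k a) = mor0 k i by rewrite -Ha; apply: (mor_src k a).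
  have Et : ctgt (mor1 k a) = mor0 k (cyc_tgt a) by apply: (mor_tgt k a).
  case: (off_cycle_step (off a)) => _ []; rewrite Es // Et => deeper.
  have := @leq_bigmax _ (fun j : 'I_q => depth (mor0 k j)) (cyc_tgt a).
  by rewrite imax deeper ltnn.
have [e1 [w1 [E1 F1]]] := retract (i, true) erefl.
have [e2 [w2 [E2 F2]]] := retract (ord_pred i, false) (ord_predK i).
have E12 : e1 = e2 by move: E1; rewrite E2 => -[].
have : mor1 k (i, true) = mor1 k (ord_pred i, false).
  apply: charc_eq; last by rewrite F1 F2 E12.
  have -> : csrc (mor1 k (i, true)) = mor0 k i := mor_src k (i, true).
  have -> : csrc (mor1 k (ord_pred i, false)) = mor0 k (ordS (ord_pred i)).
    exact: (mor_src k (ord_pred i, false)).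
  by rewrite ord_predK.
by move/k1_inj.
Qed.

(* Retracting a walk half-arc by half-arc connects every node to its root. *)
Lemma connected_to_root (x : cnode) :
  clos_refl_trans cnode off_cycle_adj x (cycle_node (root x)).
Proof.
case: x => [[n w] red]; rewrite /root /=.
elim: w red => [|e w IH] red.
  by case: red; apply: rt_refl.
have [red' _ _] := red.
have Se : src (inv e) = cnode_below (exist _ (n, e :: w) red) by rewrite src_inv.
apply: rt_trans (IH red'); apply: rt_step.
exists (existT _ _ (exist _ (inv e) Se)); split; last split=> //.
  case=> a /(f_equal csrc) /(f_equal sval) [_] /=; discriminate.
apply: cnode_eq; rewrite /ctgt cstep_val /=.
case: stepP => [a // | _ /(_ e w erefl) // | e' w' [<- <-] _ //].
Qed.

Lemma root_connected (x y : cnode) :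
  clos_refl_trans cnode off_cycle_adj x y -> root x = root y.
Proof.
elim=> [x' y' [u [off [<- <-]]] | // | x' y' z' _ -> _ ->] //.
by case: (off_cycle_step off).
Qed.

Lemma cover_cycle_unicyclic : unicyclic_with cover_cycle.
Proof.
split=> [q k q_gt0 k_inj | v]; first exact: off_cycle_acyclic.
exists (root v); split; first exact: connected_to_root.
by move=> n' /root_connected.
Qed.

Lemma cyclic_cover_in_R (X : graph) (g : mor Z X) :
  no_loops Z -> covering g -> in_R p (mor_comp g cover_map).
Proof.
move=> hZ cg; split; first exact: covering_comp (cover_map_covering hZ) cg.
by exists cover_cycle; split; [exact: cover_cycle_injective | exact: cover_cycle_unicyclic].
Qed.

End CyclicCover.

(* Walks are lifted half-arc by
   half-arc, starting from de. *)
Section LiftCyclicCover.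
Variables (Y Z : graph) (h : mor Y Z).
Hypotheses (hY : no_loops Y) (hZ : no_loops Z) (hh : covering h).

(* Endpoint of the lift at y of the half-arc e (y itself if there is none). *)
Definition lift_tgt (y : node Y) (e : harc Z) : node Y :=
  match excluded_middle_informative (exists e', src e' = y /\ mor1 h e' = e) with
  | left H => tgt (sval (constructive_indefinite_description _ H))
  | right _ => y
  end.

Lemma lift_tgtP y e : src e = mor0 h y ->
  exists e1, [/\ src e1 = y, mor1 h e1 = e & lift_tgt y e = tgt e1].
Proof.
move=> Se; rewrite /lift_tgt; case: excluded_middle_informative => [H|noH].
  by case: constructive_indefinite_description => e1 [S1 H1] /=; exists e1.
by case: noH; have [e1 [? ?]] := covering_src_lift hh hZ Se; exists e1.
Qed.

Variables (p : nat) (ga : pcycle p Z) (nb_ga : nb_cycle ga) (de : pcycle p Y).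
Hypothesis h_de : mor_comp h de = ga.

(* Endpoint of the lift of a walk (stored last half-arc first) from y0. *)
Fixpoint lift_walk (y0 : node Y) (w : seq (harc Z)) : node Y :=
  if w is e :: w' then lift_tgt (lift_walk y0 w') e else y0.

Definition lift_node (x : cnode ga) : node Y :=
  lift_walk (mor0 de (sval x).1) (sval x).2.

Lemma lift_walk_below n w : reduced ga n w ->
  mor0 h (lift_walk (mor0 de n) w) = walk_end ga n w.
Proof.
elim: w => [|e w IH] /= red; first by rewrite -h_de.
have [red' Se _] := red.
have [e1 [_ <- ->]] := lift_tgtP (etrans Se (esym (IH red'))).
by rewrite mor_tgt.
Qed.

Lemma lift_node_below (x : cnode ga) : mor0 h (lift_node x) = cnode_below x.
Proof. by case: x => [[n w] red]; apply: lift_walk_below. Qed.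

Lemma lift_arc_proof (u : charc ga) :
  src (carc_below u) = mor0 h (lift_node (csrc u)).
Proof. by rewrite lift_node_below; exact: proj2_sig (projT2 u). Qed.

Definition lift_arc (u : charc ga) : harc Y :=
  sval (constructive_indefinite_description _
          (covering_src_lift hh hZ (lift_arc_proof u))).

Lemma lift_arcP u : src (lift_arc u) = lift_node (csrc u) /\
                    mor1 h (lift_arc u) = carc_below u.
Proof. by rewrite /lift_arc; case: constructive_indefinite_description. Qed.

Let lift_uniq := covering_src_inj hh hY.

Lemma lift_arc_tgt u : tgt (lift_arc u) = lift_node (ctgt u).
Proof.
have [] := lift_arcP u; move: (lift_arc u) => k.
case: u => [[[n w] red] [e Se]]; rewrite /csrc /carc_below /ctgt /lift_node cstep_val /=.
case: stepP => [a w0 Ha Ea | _ _ | e' w' w'E Ee] /= Sk Hk.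
- subst w; have -> : k = mor1 de a.
    apply: lift_uniq; first by rewrite Sk mor_src /= Ha.
    by rewrite Hk -Ea -h_de.
  by rewrite mor_tgt.
- have [e1 [S1 H1 ->]] := lift_tgtP (etrans Se (esym (lift_walk_below red))).
  by congr tgt; apply: lift_uniq; [rewrite Sk S1 | rewrite Hk H1].
- subst w; have [red' S' _] := red.
  have [e1 [S1 H1 E1]] := lift_tgtP (etrans S' (esym (lift_walk_below red'))).
  rewrite /= E1 in Sk.
  have -> : k = inv e1.
    by apply: lift_uniq; [rewrite Sk src_inv | rewrite Hk mor_inv H1 Ee].
  by rewrite tgt_inv.
Qed.

Definition cover_lift : mor (cyclic_cover nb_ga) Y.
Proof.
refine (@Mor (cyclic_cover nb_ga) Y lift_node lift_arc _ _ _) => u.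
- exact: (proj1 (lift_arcP u)).
- exact: lift_arc_tgt.
- apply: lift_uniq.
  + by rewrite src_inv lift_arc_tgt (proj1 (lift_arcP _)).
  + by rewrite mor_inv !(proj2 (lift_arcP _)).
Defined.

Lemma cover_lift_below : mor_comp h cover_lift = cover_map nb_ga.
Proof.
apply: mor_ext => /= [x | u]; first exact: lift_node_below.
exact: (proj2 (lift_arcP u)).
Qed.

Lemma cover_lift_cycle : mor_comp cover_lift (cover_cycle nb_ga) = de.
Proof.
apply: mor_ext => //= a; apply: lift_uniq.
- by rewrite (proj1 (lift_arcP _)) mor_src.
- by rewrite (proj2 (lift_arcP _)) /= -h_de.
Qed.

Lemma cover_lift_covering : covering cover_lift.
Proof.
by apply: (covering_cancel hh); rewrite cover_lift_below; apply: cover_map_covering.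
Qed.

End LiftCyclicCover.

(* A weak equivalence h between loopless coverings of X induces, for every
   p >= 1, a bijection c |-> h o c between the non-backtracking p-cycles of Y
   and those of Z: test the weak equivalence against the cyclic cover of h o c
   (for injectivity) or of a cycle of Z (for surjectivity). *)
Section WeakEquivalenceCycles.
Variables (X Y Z : graph) (f : mor Y X) (g : mor Z X) (h : mor Y Z).
Hypotheses (hY : no_loops Y) (hZ : no_loops Z) (hg : covering g) (hh : covering h).
Hypotheses (hcomm : mor_comp g h = f) (hweq : weak_equiv f g h).
Variables (p : nat) (p_gt0 : 0 < p).

Lemma weak_equiv_cycle_inj (de1 de2 : pcycle p Y) :
  nb_cycle de1 -> mor_comp h de1 = mor_comp h de2 -> de1 = de2.
Proof.
move=> nb1 E12.
have nb_ga := nb_cycle_comp hh hY nb1.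
have [inj _] := hweq p_gt0 (cyclic_cover_in_R nb_ga hZ hg).
have lift_over_X (de : pcycle p Y) (h_de : mor_comp h de = mor_comp h de1) :
    mor_comp f (cover_lift hY hZ hh nb_ga h_de) = mor_comp g (cover_map nb_ga).
  by rewrite -hcomm -mor_comp_assoc cover_lift_below.
have E1 : mor_comp h de1 = mor_comp h de1 by [].
have E2 : mor_comp h de2 = mor_comp h de1 by rewrite E12.
have := inj _ _ (cover_lift_covering hY hZ hh E1) (cover_lift_covering hY hZ hh E2)
  (lift_over_X _ E1) (lift_over_X _ E2).
rewrite !cover_lift_below => /(_ erefl) Elift.
by rewrite -(cover_lift_cycle hY hZ hh nb_ga E1) -(cover_lift_cycle hY hZ hh nb_ga E2) Elift.
Qed.

Lemma weak_equiv_cycle_surj (ga : pcycle p Z) : nb_cycle ga ->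
  exists2 de : pcycle p Y, nb_cycle de & mor_comp h de = ga.
Proof.
move=> nb_ga.
have [_ surj] := hweq p_gt0 (cyclic_cover_in_R nb_ga hZ hg).
have [k [_ _ hk]] := surj _ (cover_map_covering hZ) erefl.
have h_de : mor_comp h (mor_comp k (cover_cycle nb_ga)) = ga.
  by rewrite mor_comp_assoc hk cover_map_cycle.
exists (mor_comp k (cover_cycle nb_ga)) => // -[j Ej]; apply: (nb_ga); exists j.
by rewrite -h_de; move: Ej => /= ->.
Qed.

Lemma weak_equiv_cycle_count (cY cZ : nat) :
  has_card (@nb_cycle Y p) cY -> has_card (@nb_cycle Z p) cZ -> cY = cZ.
Proof.
move=> hcY hcZ; apply: (has_card_bij hcY hcZ (phi := fun de => mor_comp h de)).
- by move=> de; apply: nb_cycle_comp.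
- by move=> de1 de2 nb1 _; apply: weak_equiv_cycle_inj.
- exact: weak_equiv_cycle_surj.
Qed.

End WeakEquivalenceCycles.

Lemma ihara_zeta_eq (c c' : nat -> nat) :
  (forall p, 0 < p -> c p = c' p) -> ihara_zeta c = ihara_zeta c'.
Proof.
move=> cc'; apply: functional_extensionality => n; rewrite /ihara_zeta.
suff -> : zeta_trunc_log c n = zeta_trunc_log c' n by [].
by apply: eq_big_nat => i /andP [i_gt0 _]; rewrite cc'.
Qed.

Theorem proposition5p4 (X Y Z : graph) (f : mor Y X) (g : mor Z X)
  (hf : covering f) (hg : covering g)
  (hY : no_loops Y) (hZ : no_loops Z)
  (finY : forall p, 0 < p -> exists n, has_card (@nb_cycle Y p) n)
  (finZ : forall p, 0 < p -> exists n, has_card (@nb_cycle Z p) n)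
  (h : mor Y Z) (hh : covering h) (hcomm : mor_comp g h = f)
  (hweq : weak_equiv f g h)
  (cY cZ : nat -> nat)
  (hcY : forall p, 0 < p -> has_card (@nb_cycle Y p) (cY p))
  (hcZ : forall p, 0 < p -> has_card (@nb_cycle Z p) (cZ p)) :
  ihara_zeta cY = ihara_zeta cZ.
Proof.
apply: ihara_zeta_eq => p p_gt0.
exact: (weak_equiv_cycle_count hY hZ hg hh hcomm hweq p_gt0 (hcY p p_gt0) (hcZ p p_gt0)).
Qed.
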